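(* Let $e_1,e_2$ be forward events in a pre-reversible LTSI satisfying IRE and RPI. Then $e_1\prec e_2$ if and only if $e_1$ is composable with $e_2$ and not $e_1\odot e_2$.
   Context: A combined LTS consists of a set $\mathsf{Proc}$ of processes, a set $\mathsf{Lab}$ of labels, a forward relation $P\xrightarrow{a}Q$ and a backward relation $P\rightsquigarrow^{a}Q$ with $P\xrightarrow aQ$ iff $Q\rightsquigarrow^aP$. A transition is a forward or backward step $t$; its inverse $\bar t$ is the same step in the opposite direction (forward becomes backward with the same label and vice versa). Transitions are coinitial if they share a source, composable if the target of the first is the source of the second. A path is a finite sequence of composable transitions; it is rooted if its source cannot perform any backward transition. An LTSI is a combined LTS together with an irreflexive symmetric relation $\iota$ on transitions. Axioms: (SP) if $t:P\to Q$ and $u:P\to R$ are coinitial with $t\mathrel\iota u$, then there are $u':Q\to S$ with the same label and direction as $u$ and $t':R\to S$ with the same label and direction as $t$; (BTI) any two distinct coinitial backward transitions are independent; (WF) there is no infinite sequence of processes $P_0,P_1,\dots$ with a forward transition $P_{i+1}\to P_i$ for all $i$; (PCI) if $t:P\to Q$, $u:P\to R$, $u':Q\to S$, $t':R\to S$ where $u'$ has the label and direction of $u$ and $t'$ those of $t$, and $t\mathrel\iota u$, then $u'\mathrel\iota\bar t$. An LTSI is pre-reversible if it satisfies SP, BTI, WF and PCI. Event equivalence $\sim$ is the smallest equivalence relation on transitions such that whenever $t,u,u',t'$ form a square as in PCI with $t\mathrel\iota u$, then $t\sim t'$. Events are $\sim$-classes $[t]$; an event is forward if it is the class of a forward transition,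 and $\bar e=[\bar t]$ for $e=[t]$. (IRE) if $t\sim t'$ and $t'\mathrel\iota u$ then $t\mathrel\iota u$. (RPI) if $t\mathrel\iota t'$ then $\bar t\mathrel\iota t'$. For a path $r$ and event $e$: $\sharp(\varepsilon,e)=0$ and $\sharp(tr,e)=\sharp(r,e)+1$ if $t\in e$, $\sharp(r,e)-1$ if $t\in\bar e$, $\sharp(r,e)$ otherwise. Core independence: $e\odot e'$ iff there are coinitial $t\in e$, $t'\in e'$ with $t\mathrel\iota t'$. For forward events: $e\le e'$ iff for every rooted path $r$, $\sharp(r,e')>0$ implies $\sharp(r,e)>0$; $e<e'$ iff $e\le e'$ and $e\ne e'$; $e_1\prec e_2$ (immediate predecessor) iff $e_1<e_2$ and there is no event $e$ with $e_1<e<e_2$. Events $e_1,e_2$ are composable if there are $t_1\in e_1$, $t_2\in e_2$ with $t_1$ composable with $t_2$. *)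

From Stdlib Require Import ZArith List ClassicalEpsilon.
Set Implicit Arguments.
Open Scope Z_scope.

(* A raw step: source, label, target, direction (true = forward). *)
Record rtrans (P L : Type) := mkTr { src : P; lbl : L; tgt : P; fwd : bool }.
Arguments mkTr {P L}.

Section Raw.
Variables (P L : Type) (fstep : P -> L -> P -> Prop).

(* t is an actual transition of the combined LTS: a forward step P -a-> Q,
   or a backward step Q ~>^a P, which holds iff P -a-> Q. *)
Definition valid (t : rtrans P L) : Prop :=
  if fwd t then fstep (src t) (lbl t) (tgt t)
  else fstep (tgt t) (lbl t) (src t).

Definition inv (t : rtrans P L) : rtrans P L :=
  mkTr (tgt t) (lbl t) (src t) (negb (fwd t)).
End Raw.

Record LTSI := {
  Proc : Type;
  Lab : Type;
  fstep : Proc -> Lab -> Proc -> Prop;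
  iota : rtrans Proc Lab -> rtrans Proc Lab -> Prop;
  iota_trans : forall t u, iota t u -> valid fstep t /\ valid fstep u;
  iota_irrefl : forall t, ~ iota t t;
  iota_sym : forall t u, iota t u -> iota u t
}.

Section Theory.
Variable X : LTSI.
Notation tr := (rtrans (Proc X) (Lab X)).
Notation vt := (valid (fstep X)).
Notation ι := (iota X).

(* t : P -> Q, u : P -> R, u' : Q -> S, t' : R -> S, with u' having the
   label and direction of u, and t' those of t. *)
Definition square (t u u' t' : tr) : Prop :=
  vt t /\ vt u /\ vt u' /\ vt t' /\
  src t = src u /\ src u' = tgt t /\ src t' = tgt u /\ tgt u' = tgt t' /\
  lbl u' = lbl u /\ fwd u' = fwd u /\ lbl t' = lbl t /\ fwd t' = fwd t.

Definition SP : Prop :=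
  forall t u, vt t -> vt u -> src t = src u -> ι t u ->
    exists u' t', square t u u' t'.

Definition BTI : Prop :=
  forall t u, vt t -> vt u -> src t = src u -> fwd t = false -> fwd u = false ->
    t <> u -> ι t u.

Definition WF : Prop :=
  ~ exists p : nat -> Proc X, forall i, exists a, fstep X (p (S i)) a (p i).

Definition PCI : Prop :=
  forall t u u' t', square t u u' t' -> ι t u -> ι u' (inv t).

Definition pre_reversible : Prop := SP /\ BTI /\ WF /\ PCI.

Inductive evq : tr -> tr -> Prop :=
| evq_refl : forall t, evq t t
| evq_sym : forall t u, evq t u -> evq u t
| evq_trans : forall t u v, evq t u -> evq u v -> evq t v
| evq_sq : forall t u u' t', square t u u' t' -> ι t u -> evq t t'.

Definition IRE : Prop := forall t t' u, evq t t' -> ι t' u -> ι t u.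
Definition RPI : Prop := forall t t', ι t t' -> ι (inv t) t'.

(* events are ~-classes of transitions, represented as sets *)
Definition event := tr -> Prop.
Definition is_event (e : event) : Prop :=
  exists t, vt t /\ forall u, e u <-> evq t u.
Definition is_fwd_event (e : event) : Prop :=
  exists t, vt t /\ fwd t = true /\ forall u, e u <-> evq t u.
Definition ebar (e : event) : event :=
  fun u => exists t, e t /\ evq (inv t) u.
Definition ev_eq (e e' : event) : Prop := forall u, e u <-> e' u.

Fixpoint is_path (p : Proc X) (r : list tr) : Prop :=
  match r with
  | nil => True
  | t :: r' => vt t /\ src t = p /\ is_path (tgt t) r'
  end.
Definition rooted (p : Proc X) : Prop := forall q a, ~ fstep X q a p.

Definition contrib (t : tr) (e : event) : Z :=
  if excluded_middle_informative (e t) then 1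
  else if excluded_middle_informative (ebar e t) then -1 else 0.

Fixpoint sharp (r : list tr) (e : event) : Z :=
  match r with
  | nil => 0
  | t :: r' => sharp r' e + contrib t e
  end.

Definition ev_le (e e' : event) : Prop :=
  forall p r, rooted p -> is_path p r -> sharp r e' > 0 -> sharp r e > 0.
Definition ev_lt (e e' : event) : Prop := ev_le e e' /\ ~ ev_eq e e'.
Definition ev_prec (e1 e2 : event) : Prop :=
  ev_lt e1 e2 /\ ~ exists e, is_fwd_event e /\ ev_lt e1 e /\ ev_lt e e2.

Definition core_indep (e e' : event) : Prop :=
  exists t t', e t /\ e' t' /\ src t = src t' /\ ι t t'.

Definition ev_composable (e1 e2 : event) : Prop :=
  exists t1 t2, e1 t1 /\ e2 t2 /\ tgt t1 = src t2.
End Theory.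

(** Write [occ q e] for the number of times the forward event [e] occurs in the history of the
    process [q]: minus the count of [e] along any maximal backward path from [q].  It is well
    defined because two backward steps out of the same process are independent (BTI), so they
    close into a square (SP) whose opposite sides lie in the same events; by well-founded
    induction (WF), all maximal backward paths count every event equally.  Then
    [sharp r e = occ (end of r) e - occ (start of r) e] for every path [r], and [e <= e'] says
    that [e'] can only have occurred where [e] has.

    If [e] and [e'] are not core independent, [occ _ e'] is the same at the sources of all the
    transitions in [e], because a square can only change it through a side in [e'] or its
    inverse.  Taking [e' = e] shows that [e] has never occurred at the source of one of its own
    transitions.  So if [t1 ∈ e1] is followed by [t2 ∈ e2], every history of [e2] contains
    [e1], and no third event fits between them.  Conversely, if [e1 ≺ e2], pick [x ∈ e2] with
    no backward transition at its source independent of it, walk back from [src x] to an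
    occurrence of [e1], and push that occurrence forward along the walk (undoing the square
    whenever it is independent of the next step): this gives a forward [y] into [src x] with
    [e1 <= [y]], and [[y]] lies strictly between [e1] and [e2] unless [y ∈ e1]. *)
From Stdlib Require Import ZArith List Lia Classical ClassicalEpsilon.
Open Scope Z_scope.
Set Implicit Arguments.
Unset Strict Implicit.

Lemma inv_involutive (P L : Type) (t : rtrans P L) : inv (inv t) = t.
Proof. destruct t as [p a q [|]]; reflexivity. Qed.

Lemma valid_inv (P L : Type) (f : P -> L -> P -> Prop) (t : rtrans P L) :
  valid f t -> valid f (inv t).
Proof. destruct t as [p a q [|]]; unfold valid, inv; simpl; auto. Qed.

Section Events.

Variable X : LTSI.
Local Notation tr := (rtrans (Proc X) (Lab X)).
Local Notation vt := (valid (fstep X)).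
Local Notation ι := (iota X).
Local Notation bwd t := (fwd t = false).

Hypotheses (HSP : SP X) (HBTI : BTI X) (HWF : WF X) (HPCI : PCI X) (HIRE : IRE X) (HRPI : RPI X).

Lemma valid_bwd (t : tr) : vt t -> bwd t -> fstep X (tgt t) (lbl t) (src t).
Proof. unfold valid. intros Ht Hb. rewrite Hb in Ht. exact Ht. Qed.

Lemma evq_valid (t u : tr) : evq X t u -> t = u \/ (vt t /\ vt u).
Proof.
  induction 1 as [t|t u _ IH|t u v _ IH1 _ IH2|t u u' t' Hsq _].
  - left; reflexivity.
  - destruct IH as [->|[]]; auto.
  - destruct IH1 as [->|[]]; destruct IH2 as [->|[]]; auto.
  - right. destruct Hsq as (? & _ & _ & ? & _). auto.
Qed.

Lemma evq_fwd (t u : tr) : evq X t u -> fwd t = fwd u.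
Proof.
  induction 1 as [| | |t u u' t' Hsq _]; try congruence.
  destruct Hsq as (_ & _ & _ & _ & _ & _ & _ & _ & _ & _ & _ & ->). reflexivity.
Qed.

Lemma square_sym (t u u' t' : tr) : square X t u u' t' -> square X u t t' u'.
Proof. unfold square; intuition congruence. Qed.

Lemma square_rotate (t u u' t' : tr) : square X t u u' t' -> square X u' (inv t) (inv t') u.
Proof.
  unfold square, inv; simpl. intuition (try congruence; apply valid_inv; assumption).
Qed.

Lemma evq_square_r (t u u' t' : tr) : square X t u u' t' -> ι t u -> evq X u u'.
Proof.
  intros Hsq Hi.
  apply evq_sq with (u := t) (u' := t'); [apply square_sym, Hsq | apply iota_sym, Hi].
Qed.

Lemma evq_inv (t u : tr) : evq X t u -> evq X (inv t) (inv u).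
Proof.
  induction 1 as [t|t u _ IH|t u v _ IH1 _ IH2|t u u' t' Hsq Hi].
  - apply evq_refl.
  - apply evq_sym, IH.
  - eapply evq_trans; eauto.
  - exact (evq_square_r (square_rotate Hsq) (HPCI Hsq Hi)).
Qed.

Section FwdEvent.

Variable e : event X.
Hypothesis He : is_fwd_event e.

Lemma fwd_event_mem (t : tr) : e t -> forall u, e u <-> evq X t u.
Proof.
  destruct He as (t0 & _ & _ & Ht0). intros Ht u. rewrite Ht0 in Ht |- *. split; intros Hu.
  - eapply evq_trans; [apply evq_sym, Ht | exact Hu].
  - eapply evq_trans; eauto.
Qed.

Lemma fwd_event_closed (t u : tr) : e t -> evq X t u -> e u.
Proof. intros Ht. apply (fwd_event_mem Ht). Qed.

Lemma fwd_event_fwd (t : tr) : e t -> fwd t = true /\ vt t.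
Proof.
  destruct He as (t0 & Vt0 & Ft0 & Ht0). intros Ht. apply Ht0 in Ht. split.
  - rewrite <- (evq_fwd Ht). exact Ft0.
  - destruct (evq_valid Ht) as [<-|[]]; auto.
Qed.

Lemma ebar_fwd_event (u : tr) : ebar e u <-> e (inv u).
Proof.
  split.
  - intros (t & Ht & Htu). apply fwd_event_closed with t; [exact Ht|].
    rewrite <- (inv_involutive t). apply evq_inv, Htu.
  - intros Hu. exists (inv u). rewrite inv_involutive. split; [exact Hu | apply evq_refl].
Qed.

Lemma contrib_in (u : tr) : e u -> contrib u e = 1.
Proof. intros Hu. unfold contrib. destruct excluded_middle_informative; tauto. Qed.

Lemma contrib_fwd_notin (u : tr) : fwd u = true -> ~ e u -> contrib u e = 0.
Proof.
  intros Fu Hu. unfold contrib.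
  destruct excluded_middle_informative; [tauto|].
  destruct excluded_middle_informative as [Hb|]; [|reflexivity].
  apply ebar_fwd_event, fwd_event_fwd in Hb.
  destruct u as [p a q [|]]; simpl in *; destruct Hb; discriminate.
Qed.

Lemma contrib_bwd_in (u : tr) : bwd u -> e (inv u) -> contrib u e = -1.
Proof.
  intros Bu Hu. unfold contrib. destruct excluded_middle_informative as [Hu'|].
  - apply fwd_event_fwd in Hu'. destruct Hu'; congruence.
  - destruct excluded_middle_informative as [|Hb]; [reflexivity|].
    exfalso; apply Hb, ebar_fwd_event, Hu.
Qed.

Lemma contrib_bwd_notin (u : tr) : bwd u -> ~ e (inv u) -> contrib u e = 0.
Proof.
  intros Bu Hu. unfold contrib. destruct excluded_middle_informative as [Hu'|].
  - apply fwd_event_fwd in Hu'. destruct Hu'; congruence.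
  - destruct excluded_middle_informative as [Hb|]; [|reflexivity].
    exfalso; apply Hu, ebar_fwd_event, Hb.
Qed.

Lemma contrib_bwd_nonpos (u : tr) : bwd u -> contrib u e <= 0.
Proof.
  intros Bu. destruct (classic (e (inv u))).
  - rewrite contrib_bwd_in; auto; lia.
  - rewrite contrib_bwd_notin; auto; lia.
Qed.

Lemma contrib_neg (u : tr) : contrib u e < 0 -> bwd u /\ e (inv u).
Proof.
  unfold contrib. destruct excluded_middle_informative; [lia|].
  destruct excluded_middle_informative as [Hb|]; [|lia]. intros _.
  apply ebar_fwd_event in Hb. split; [|exact Hb].
  destruct (fwd_event_fwd Hb) as [Fu _]. destruct u as [p a q [|]]; simpl in *; congruence.
Qed.

Lemma contrib_inv (u : tr) : contrib (inv u) e = - contrib u e.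
Proof.
  destruct (fwd u) eqn:Fu.
  - assert (Bu : bwd (inv u)) by (unfold inv; simpl; rewrite Fu; reflexivity).
    destruct (classic (e u)) as [Hu|Hu].
    + rewrite (contrib_in Hu), contrib_bwd_in; rewrite ?inv_involutive; auto.
    + rewrite (contrib_fwd_notin Fu Hu), contrib_bwd_notin; rewrite ?inv_involutive; auto.
  - assert (Fu' : fwd (inv u) = true) by (unfold inv; simpl; rewrite Fu; reflexivity).
    destruct (classic (e (inv u))) as [Hu|Hu].
    + rewrite (contrib_in Hu), (contrib_bwd_in Fu Hu). reflexivity.
    + rewrite (contrib_fwd_notin Fu' Hu), (contrib_bwd_notin Fu Hu). reflexivity.
Qed.

Lemma contrib_evq (u v : tr) : evq X u v -> contrib u e = contrib v e.
Proof.
  intros Huv. assert (Fuv := evq_fwd Huv). destruct (fwd u) eqn:Fu.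
  - destruct (classic (e u)) as [Hu|Hu].
    + rewrite (contrib_in Hu), (contrib_in (fwd_event_closed Hu Huv)). reflexivity.
    + rewrite (contrib_fwd_notin Fu Hu), contrib_fwd_notin; auto.
      intros Hv. apply Hu, fwd_event_closed with v; [exact Hv | apply evq_sym, Huv].
  - assert (Hinv := evq_inv Huv). destruct (classic (e (inv u))) as [Hu|Hu].
    + rewrite (contrib_bwd_in Fu Hu), (contrib_bwd_in (eq_sym Fuv) (fwd_event_closed Hu Hinv)).
      reflexivity.
    + rewrite (contrib_bwd_notin Fu Hu), contrib_bwd_notin; auto.
      intros Hv. apply Hu, fwd_event_closed with (inv v); [exact Hv | apply evq_sym, Hinv].
Qed.

End FwdEvent.

Lemma fwd_event_ev_eq (e e' : event X) (t : tr) :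
  is_fwd_event e -> is_fwd_event e' -> e t -> e' t -> ev_eq e e'.
Proof.
  intros He He' Ht Ht' u. rewrite (fwd_event_mem He Ht), (fwd_event_mem He' Ht'). tauto.
Qed.

Lemma class_fwd_event (t : tr) : vt t -> fwd t = true -> is_fwd_event (evq X t).
Proof. intros Vt Ft. exists t. repeat split; auto. Qed.

Lemma contrib_cases (e : event X) (u : tr) :
  contrib u e = 1 \/ contrib u e = -1 \/ contrib u e = 0.
Proof. unfold contrib. repeat destruct excluded_middle_informative; auto. Qed.

Lemma contrib_eq1 (e : event X) (u : tr) : contrib u e = 1 -> e u.
Proof. unfold contrib. repeat destruct excluded_middle_informative; auto; lia. Qed.

Lemma contrib_ev_eq (e e' : event X) (t : tr) : ev_eq e e' -> contrib t e = contrib t e'.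
Proof.
  intros Hee. unfold contrib, ebar.
  repeat destruct excluded_middle_informative; auto; exfalso;
    try (match goal with h : ~ _ |- _ => apply h end); firstorder.
Qed.

Lemma sharp_ev_eq (e e' : event X) (r : list tr) : ev_eq e e' -> sharp r e = sharp r e'.
Proof.
  intros Hee. induction r as [|t r IH]; simpl; [reflexivity|].
  rewrite IH, (contrib_ev_eq t Hee). reflexivity.
Qed.

Lemma ev_le_ev_eq (e1 e2 e1' e2' : event X) :
  ev_eq e1 e1' -> ev_eq e2 e2' -> ev_le e1 e2 -> ev_le e1' e2'.
Proof.
  intros H1 H2 Hle p r Hp Hr. rewrite <- (sharp_ev_eq r H1), <- (sharp_ev_eq r H2).
  exact (Hle p r Hp Hr).
Qed.

Lemma ev_le_trans (e1 e2 e3 : event X) : ev_le e1 e2 -> ev_le e2 e3 -> ev_le e1 e3.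
Proof. intros H12 H23 p r Hp Hr Hs. eauto. Qed.

Fixpoint path_end (p : Proc X) (r : list tr) : Proc X :=
  match r with
  | nil => p
  | t :: r' => path_end (tgt t) r'
  end.

Lemma path_end_app (p : Proc X) (r1 r2 : list tr) :
  path_end p (r1 ++ r2) = path_end (path_end p r1) r2.
Proof. revert p. induction r1 as [|t r1 IH]; intros p; simpl; auto. Qed.

Lemma is_path_app (p : Proc X) (r1 r2 : list tr) :
  is_path X p (r1 ++ r2) <-> is_path X p r1 /\ is_path X (path_end p r1) r2.
Proof. revert p. induction r1 as [|t r1 IH]; intros p; simpl; [tauto | rewrite IH; tauto]. Qed.

Definition fwd_step (p q : Proc X) : Prop := exists a, fstep X p a q.

Lemma fwd_step_wf : well_founded fwd_step.
Proof.
  assert (Hpred : forall q, ~ Acc fwd_step q -> exists p, fwd_step p q /\ ~ Acc fwd_step p).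
  { intros q Hq. apply NNPP. intros Hno. apply Hq. constructor. intros p Hp.
    apply NNPP. intros Hp'. apply Hno. eauto. }
  intros q0. apply NNPP. intros Hq0.
  set (next q := epsilon (inhabits q) (fun p => fwd_step p q /\ ~ Acc fwd_step p)).
  assert (Hnext : forall q, ~ Acc fwd_step q -> fwd_step (next q) q /\ ~ Acc fwd_step (next q)).
  { intros q Hq. apply epsilon_spec, Hpred, Hq. }
  assert (Hchain : forall n, ~ Acc fwd_step (Nat.iter n next q0)).
  { induction n as [|n IH]; simpl; [exact Hq0 | apply Hnext, IH]. }
  apply HWF. exists (fun n => Nat.iter n next q0). intros i. apply (Hnext _ (Hchain i)).
Qed.

Lemma rooted_or_fwd_step (q : Proc X) : rooted X q \/ exists p a, fstep X p a q.
Proof.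
  destruct (classic (exists p a, fstep X p a q)) as [|Hno]; [right; assumption | left].
  intros p a Hpq. apply Hno. eauto.
Qed.

Definition bwd_root_path (q : Proc X) (b : list tr) : Prop :=
  is_path X q b /\ Forall (fun t => bwd t) b /\ rooted X (path_end q b).

Lemma bwd_root_path_exists (q : Proc X) : exists b, bwd_root_path q b.
Proof.
  induction q as [q IH] using (well_founded_ind fwd_step_wf).
  destruct (rooted_or_fwd_step q) as [Hq | (p & a & Hpq)].
  - exists nil. repeat split; auto.
  - destruct (IH p (ex_intro _ a Hpq)) as (b & Pb & Bb & Rb).
    exists (mkTr q a p false :: b). repeat split; auto.
Qed.

Lemma rooted_bwd_root_path (q : Proc X) (b : list tr) :
  rooted X q -> bwd_root_path q b -> b = nil.
Proof.
  intros Hq (Pb & Bb & _). destruct b as [|w b]; [reflexivity | exfalso].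
  destruct Pb as (Vw & <- & _). inversion Bb as [|? ? Bw]; subst.
  exact (Hq _ _ (valid_bwd Vw Bw)).
Qed.

Lemma bwd_root_paths_sharp_eq (e : event X) : is_fwd_event e ->
  forall q b1 b2, bwd_root_path q b1 -> bwd_root_path q b2 -> sharp b1 e = sharp b2 e.
Proof.
  intros He q. induction q as [q IH] using (well_founded_ind fwd_step_wf).
  intros [|w1 b1] [|w2 b2] H1 H2.
  - reflexivity.
  - destruct H1 as (_ & _ & R1). rewrite (rooted_bwd_root_path R1 H2). reflexivity.
  - destruct H2 as (_ & _ & R2). rewrite (rooted_bwd_root_path R2 H1). reflexivity.
  - destruct H1 as ((V1 & S1 & P1) & B1 & R1), H2 as ((V2 & S2 & P2) & B2 & R2).
    apply Forall_cons_iff in B1 as [Bw1 B1], B2 as [Bw2 B2]. subst q. simpl in R1, R2.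
    assert (D1 : fwd_step (tgt w1) (src w1)) by (exists (lbl w1); apply valid_bwd; auto).
    assert (D2 : fwd_step (tgt w2) (src w1))
      by (exists (lbl w2); rewrite <- S2; apply valid_bwd; auto).
    destruct (classic (w1 = w2)) as [<- | Hne].
    + simpl. f_equal. apply (IH _ D1); repeat split; auto.
    + assert (Hi : ι w1 w2) by (apply HBTI; auto; congruence).
      destruct (HSP V1 V2 (eq_sym S2) Hi) as (w2' & w1' & Hsq).
      pose proof Hsq as (_ & _ & V2' & V1' & _ & E2 & E3 & E4 & _ & F2 & _ & F1).
      destruct (bwd_root_path_exists (tgt w2')) as (c & Pc & Bc & Rc).
      assert (Eb1 : sharp b1 e = sharp (w2' :: c) e).
      { apply (IH _ D1); repeat split; auto. constructor; [congruence | exact Bc]. }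
      assert (Eb2 : sharp b2 e = sharp (w1' :: c) e).
      { apply (IH _ D2); repeat split; simpl; rewrite <- ?E4; auto.
        constructor; [congruence | exact Bc]. }
      simpl in Eb1, Eb2 |- *. rewrite Eb1, Eb2.
      rewrite (contrib_evq He (evq_sq Hsq Hi)), (contrib_evq He (evq_square_r Hsq Hi)). lia.
Qed.

Definition occ (q : Proc X) (e : event X) : Z :=
  - sharp (epsilon (inhabits nil) (bwd_root_path q)) e.

Lemma occ_spec (e : event X) (q : Proc X) (b : list tr) :
  is_fwd_event e -> bwd_root_path q b -> occ q e = - sharp b e.
Proof.
  intros He Hb. unfold occ. f_equal. apply (bwd_root_paths_sharp_eq He (q := q)); [|exact Hb].
  apply epsilon_spec, bwd_root_path_exists.
Qed.

Lemma sharp_bwd_nonpos (e : event X) (b : list tr) :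
  is_fwd_event e -> Forall (fun t => bwd t) b -> sharp b e <= 0.
Proof.
  intros He Hb. induction Hb as [|w b Bw _ IH]; simpl; [lia|].
  pose proof (contrib_bwd_nonpos He Bw). lia.
Qed.

Lemma occ_nonneg (e : event X) (q : Proc X) : is_fwd_event e -> 0 <= occ q e.
Proof.
  intros He. destruct (bwd_root_path_exists q) as [b Hb].
  rewrite (occ_spec He Hb). destruct Hb as (_ & Bb & _).
  pose proof (sharp_bwd_nonpos He Bb). lia.
Qed.

Lemma occ_step (e : event X) (t : tr) :
  is_fwd_event e -> vt t -> occ (tgt t) e = occ (src t) e + contrib t e.
Proof.
  intros He Vt. destruct (fwd t) eqn:Ft.
  - destruct (bwd_root_path_exists (src t)) as [b Hb].
    assert (Hb' : bwd_root_path (tgt t) (inv t :: b)).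
    { destruct Hb as (Pb & Bb & Rb). repeat split; auto.
      - apply valid_inv, Vt.
      - constructor; [unfold inv; simpl; rewrite Ft; reflexivity | exact Bb]. }
    rewrite (occ_spec He Hb), (occ_spec He Hb'). simpl. rewrite (contrib_inv He). lia.
  - destruct (bwd_root_path_exists (tgt t)) as [b Hb].
    assert (Hb' : bwd_root_path (src t) (t :: b)).
    { destruct Hb as (Pb & Bb & Rb). repeat split; auto. }
    rewrite (occ_spec He Hb), (occ_spec He Hb'). simpl. lia.
Qed.

Lemma sharp_path (e : event X) (p : Proc X) (r : list tr) :
  is_fwd_event e -> is_path X p r -> sharp r e = occ (path_end p r) e - occ p e.
Proof.
  intros He. revert p. induction r as [|t r IH]; intros p Hr; simpl; [lia|].
  destruct Hr as (Vt & <- & Hr). rewrite (IH _ Hr), (occ_step He Vt). lia.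
Qed.

Lemma occ_rooted (e : event X) (p : Proc X) : is_fwd_event e -> rooted X p -> occ p e = 0.
Proof. intros He Hp. rewrite (occ_spec (b := nil) He); [reflexivity | repeat split; auto]. Qed.

Lemma rooted_path_exists (q : Proc X) :
  exists p r, rooted X p /\ is_path X p r /\ path_end p r = q.
Proof.
  induction q as [q IH] using (well_founded_ind fwd_step_wf).
  destruct (rooted_or_fwd_step q) as [Hq | (p & a & Hpq)].
  - exists q, nil. repeat split; auto.
  - destruct (IH p (ex_intro _ a Hpq)) as (p0 & r & Hp0 & Hr & <-).
    exists p0, (r ++ mkTr (path_end p0 r) a q true :: nil). split; [exact Hp0|].
    rewrite is_path_app, path_end_app. repeat split; auto.
Qed.

Lemma ev_le_iff_occ (e e' : event X) : is_fwd_event e -> is_fwd_event e' ->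
  ev_le e e' <-> forall q, 0 < occ q e' -> 0 < occ q e.
Proof.
  intros He He'. split.
  - intros Hle q Hq. destruct (rooted_path_exists q) as (p & r & Hp & Hr & <-).
    specialize (Hle p r Hp Hr).
    rewrite (sharp_path He Hr), (sharp_path He' Hr), (occ_rooted He Hp), (occ_rooted He' Hp) in Hle.
    lia.
  - intros Hocc p r Hp Hr.
    rewrite (sharp_path He Hr), (sharp_path He' Hr), (occ_rooted He Hp), (occ_rooted He' Hp).
    specialize (Hocc (path_end p r)). lia.
Qed.

Lemma sharp_neg_split (e : event X) (b : list tr) :
  sharp b e < 0 -> exists pre w post, b = pre ++ w :: post /\ contrib w e < 0.
Proof.
  induction b as [|t b IH]; simpl; intros Hb; [lia|].
  destruct (Z_lt_le_dec (contrib t e) 0) as [Ht|Ht].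
  - exists nil, t, b. auto.
  - destruct IH as (pre & w & post & -> & Hw); [lia|]. exists (t :: pre), w, post. auto.
Qed.

Lemma occ_pos_history (e : event X) (q : Proc X) : is_fwd_event e -> 0 < occ q e ->
  exists pre w, is_path X q pre /\ Forall (fun t => bwd t) pre /\ path_end q pre = src w /\
    vt w /\ bwd w /\ e (inv w).
Proof.
  intros He Hq. destruct (bwd_root_path_exists q) as [b Hb].
  rewrite (occ_spec He Hb) in Hq.
  destruct (sharp_neg_split (e := e) (b := b) ltac:(lia)) as (pre & w & post & -> & Hw).
  destruct (contrib_neg He Hw) as [Bw Hinv].
  destruct Hb as (Pb & Bb & _). apply is_path_app in Pb as [Ppre (Vw & Sw & _)].
  apply Forall_app in Bb as [Bpre _].
  exists pre, w. repeat split; auto.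
Qed.

Lemma occ_bwd_path_le (e : event X) (q : Proc X) (b : list tr) : is_fwd_event e ->
  is_path X q b -> Forall (fun t => bwd t) b -> occ (path_end q b) e <= occ q e.
Proof.
  intros He Pb Bb. pose proof (sharp_path He Pb). pose proof (sharp_bwd_nonpos He Bb). lia.
Qed.

Lemma occ_tgt_in (e : event X) (t : tr) :
  is_fwd_event e -> e t -> occ (tgt t) e = occ (src t) e + 1.
Proof.
  intros He Ht. rewrite (occ_step He (proj2 (fwd_event_fwd He Ht))), (contrib_in Ht). reflexivity.
Qed.

Lemma occ_tgt_notin (e : event X) (t : tr) : is_fwd_event e ->
  vt t -> fwd t = true -> ~ e t -> occ (tgt t) e = occ (src t) e.
Proof. intros He Vt Ft Ht. rewrite (occ_step He Vt), (contrib_fwd_notin He Ft Ht). lia. Qed.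

Lemma occ_src_const (e e' : event X) : is_fwd_event e -> is_fwd_event e' -> ~ core_indep e' e ->
  forall x y, e x -> e y -> occ (src x) e' = occ (src y) e'.
Proof.
  intros He He' Hni.
  enough (Hevq : forall a b, evq X a b -> e a -> occ (src a) e' = occ (src b) e').
  { intros x y Hx Hy. apply Hevq; [apply (fwd_event_mem He Hx), Hy | exact Hx]. }
  induction 1 as [a|a b Hab IH|a b c Hab IH1 _ IH2|t u u' t' Hsq Hi]; intros Ha.
  - reflexivity.
  - symmetry. apply IH, (fwd_event_closed He Ha (evq_sym Hab)).
  - rewrite IH1 by exact Ha. apply IH2, (fwd_event_closed He Ha Hab).
  - pose proof Hsq as (_ & Vu & _ & _ & Stu & _ & St' & _).
    rewrite St', (occ_step He' Vu), <- Stu.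
    (* a side [u] in [e'] (resp. [inv u] in [e']) would make [e'] core independent of [e] *)
    destruct (contrib_cases e' u) as [Hu | [Hu | Hu]]; [exfalso | exfalso | lia].
    + apply Hni. exists u, t.
      repeat split; [apply contrib_eq1, Hu | exact Ha | exact (eq_sym Stu) | apply iota_sym, Hi].
    + destruct (contrib_neg He' (ltac:(lia) : contrib u e' < 0)) as [Bu Hinv].
      apply Hni. exists (inv u), t'. repeat split; auto.
      * exact (fwd_event_closed He Ha (evq_sq Hsq Hi)).
      * apply HRPI, iota_sym, HIRE with t; [apply evq_sym, (evq_sq Hsq Hi) | exact Hi].
Qed.

Lemma not_core_indep_self (e : event X) : is_fwd_event e -> ~ core_indep e e.
Proof.
  intros He (a & b & Ha & Hb & _ & Hi).
  apply (iota_irrefl X a), HIRE with b; [apply (fwd_event_mem He Ha), Hb | apply iota_sym, Hi].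
Qed.

Lemma occ_src_in (e : event X) (x : tr) : is_fwd_event e -> e x -> occ (src x) e = 0.
Proof.
  intros He Hx. pose proof (occ_nonneg (q := src x) He).
  destruct (Z.eq_dec (occ (src x) e) 0) as [|Hne]; [assumption | exfalso].
  destruct (occ_pos_history (q := src x) He ltac:(lia))
    as (pre & w & Ppre & Bpre & Epre & Vw & Bw & Hw).
  pose proof (occ_src_const He He (not_core_indep_self He) Hx Hw) as Hconst. simpl in Hconst.
  rewrite (occ_step He Vw), (contrib_bwd_in He Bw Hw) in Hconst.
  pose proof (occ_bwd_path_le He Ppre Bpre) as Hle. rewrite Epre in Hle. lia.
Qed.

Lemma ev_le_of_composable (e1 e2 : event X) (t1 t2 : tr) :
  is_fwd_event e1 -> is_fwd_event e2 -> e1 t1 -> e2 t2 -> tgt t1 = src t2 ->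
  ~ core_indep e1 e2 -> ev_le e1 e2.
Proof.
  intros He1 He2 H1 H2 Ht Hni. apply (ev_le_iff_occ He1 He2). intros q Hq.
  destruct (occ_pos_history He2 Hq) as (pre & w & Ppre & Bpre & Epre & Vw & Bw & Hw).
  pose proof (occ_src_const He2 He1 Hni Hw H2) as Hconst. simpl in Hconst.
  rewrite <- Ht, (occ_tgt_in He1 H1), (occ_step He1 Vw) in Hconst.
  pose proof (contrib_bwd_nonpos He1 Bw). pose proof (occ_nonneg (q := src t1) He1).
  pose proof (occ_bwd_path_le He1 Ppre Bpre) as Hle. rewrite Epre in Hle. lia.
Qed.

Lemma ev_neq_of_composable (e1 e2 : event X) (t1 t2 : tr) :
  is_fwd_event e1 -> is_fwd_event e2 -> e1 t1 -> e2 t2 -> tgt t1 = src t2 ->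
  ~ core_indep e1 e2 -> ~ ev_eq e1 e2.
Proof.
  intros He1 He2 H1 H2 Ht Hni Heq.
  pose proof (occ_src_const He2 He1 Hni (proj1 (Heq t1) H1) H2) as Hconst.
  rewrite <- Ht, (occ_tgt_in He1 H1) in Hconst. lia.
Qed.

Lemma not_core_indep_of_not_iota (e e' : event X) (z y : tr) :
  is_fwd_event e -> is_fwd_event e' -> e z -> e' y -> ~ ι z y -> ~ core_indep e e'.
Proof.
  intros He He' Hz Hy Hzy (a & b & Ha & Hb & _ & Hi). apply Hzy.
  apply HIRE with a; [apply (fwd_event_mem He Hz), Ha|].
  apply iota_sym, HIRE with b; [apply (fwd_event_mem He' Hy), Hb | apply iota_sym, Hi].
Qed.

Lemma class_evq (t u : tr) : evq X t u -> ev_eq (evq X t) (evq X u).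
Proof.
  intros Htu v. split; intros H; eapply evq_trans; eauto. apply evq_sym, Htu.
Qed.

Lemma bwd_path_bubble (q : Proc X) (b : list tr) (z : tr) :
  is_path X q b -> Forall (fun t => bwd t) b -> vt z -> fwd z = true -> tgt z = path_end q b ->
  exists y, vt y /\ fwd y = true /\ tgt y = q /\ ev_le (evq X z) (evq X y).
Proof.
  revert q. induction b as [|w b IH]; intros q Pb Bb Vz Fz Ez.
  - exists z. repeat split; auto. intros p r _ _ H. exact H.
  - destruct Pb as (Vw & <- & Pb). apply Forall_cons_iff in Bb as [Bw Bb].
    destruct (IH (tgt w) Pb Bb Vz Fz Ez) as (y1 & Vy1 & Fy1 & Ey1 & Hle1).
    assert (Vw' : vt (inv w)) by (apply valid_inv, Vw).
    assert (Fw' : fwd (inv w) = true) by (unfold inv; simpl; rewrite Bw; reflexivity).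
    destruct (classic (ι y1 (inv w))) as [Hi | Hni].
    + (* the side of the square opposite [inv y1] is a copy of [y1] ending in [src w] *)
      assert (Hi' := HRPI Hi).
      destruct (HSP (valid_inv Vy1) Vw' ltac:(simpl; congruence) Hi') as (c & d & Hsq).
      pose proof Hsq as (_ & _ & _ & Vd & _ & _ & Sd & _ & _ & _ & _ & Fd).
      assert (Hyd : evq X y1 (inv d)).
      { rewrite <- (inv_involutive y1). apply evq_inv, (evq_sq Hsq Hi'). }
      exists (inv d). repeat split.
      * apply valid_inv, Vd.
      * unfold inv in *; simpl in *. rewrite Fd, Fy1. reflexivity.
      * simpl. rewrite Sd. reflexivity.
      * apply ev_le_ev_eq with (evq X z) (evq X y1); [intros u; tauto | | exact Hle1].
        apply class_evq, Hyd.
    + exists (inv w). repeat split; auto.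
      apply ev_le_trans with (evq X y1); [exact Hle1|].
      apply ev_le_of_composable with y1 (inv w); auto using class_fwd_event, evq_refl.
      apply not_core_indep_of_not_iota with y1 (inv w); auto using class_fwd_event, evq_refl.
Qed.

Lemma exists_repr_no_bwd_indep (e : event X) (t : tr) : is_fwd_event e -> e t ->
  exists x, e x /\ forall w, vt w -> bwd w -> src w = src x -> ~ ι x w.
Proof.
  intros He. remember (src t) as q eqn:Eq. revert t Eq.
  induction q as [q IH] using (well_founded_ind fwd_step_wf). intros t Eq Ht.
  destruct (classic (exists w, vt w /\ bwd w /\ src w = src t /\ ι t w))
    as [(w & Vw & Bw & Sw & Hi) | Hno].
  - destruct (HSP (proj2 (fwd_event_fwd He Ht)) Vw (eq_sym Sw) Hi) as (w' & t' & Hsq).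
    pose proof Hsq as (_ & _ & _ & _ & _ & _ & St' & _).
    apply (IH (tgt w)) with t'.
    + exists (lbl w). rewrite Eq, <- Sw. apply valid_bwd; assumption.
    + symmetry. exact St'.
    + exact (fwd_event_closed He Ht (evq_sq Hsq Hi)).
  - exists t. split; [exact Ht|]. intros w Vw Bw Sw Hi. apply Hno. eauto.
Qed.

Lemma occ_src_pos_of_le (e e' : event X) (y : tr) : is_fwd_event e -> is_fwd_event e' ->
  ev_le e e' -> e' y -> ~ e y -> 0 < occ (src y) e.
Proof.
  intros He He' Hle Hy Hny. destruct (fwd_event_fwd He' Hy) as [Fy Vy].
  rewrite <- (occ_tgt_notin He Vy Fy Hny). apply (proj1 (ev_le_iff_occ He He') Hle).
  rewrite (occ_tgt_in He' Hy). pose proof (occ_nonneg (q := src y) He'). lia.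
Qed.

Lemma ev_lt_not_coinitial (e1 e2 : event X) (x y : tr) : is_fwd_event e1 -> is_fwd_event e2 ->
  ev_lt e1 e2 -> e1 x -> e2 y -> src x <> src y.
Proof.
  intros He1 He2 [Hle Hne] Hx Hy Exy.
  assert (Hy1 : ~ e1 y) by (intros Hy1; exact (Hne (fwd_event_ev_eq He1 He2 Hy1 Hy))).
  pose proof (occ_src_pos_of_le He1 He2 Hle Hy Hy1).
  rewrite <- Exy, (occ_src_in He1 Hx) in *. lia.
Qed.

Lemma no_fwd_event_between_composable (e1 e e2 : event X) (t1 t2 : tr) :
  is_fwd_event e1 -> is_fwd_event e -> is_fwd_event e2 -> e1 t1 -> e2 t2 -> tgt t1 = src t2 ->
  ~ (ev_lt e1 e /\ ev_lt e e2).
Proof.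
  intros He1 He He2 H1 H2 Ht [[Hle1 Hne1] [Hle2 Hne2]].
  assert (N1 : ~ e t1) by (intros Ht1; exact (Hne1 (fwd_event_ev_eq He1 He H1 Ht1))).
  assert (N2 : ~ e t2) by (intros Ht2; exact (Hne2 (fwd_event_ev_eq He He2 Ht2 H2))).
  destruct (fwd_event_fwd He1 H1) as [F1 V1].
  pose proof (occ_src_pos_of_le He He2 Hle2 H2 N2) as Hpos.
  rewrite <- Ht, (occ_tgt_notin He V1 F1 N1) in Hpos.
  apply (proj1 (ev_le_iff_occ He1 He) Hle1) in Hpos. rewrite (occ_src_in He1 H1) in Hpos. lia.
Qed.

Lemma ev_prec_of_composable (e1 e2 : event X) : is_fwd_event e1 -> is_fwd_event e2 ->
  ev_composable e1 e2 -> ~ core_indep e1 e2 -> ev_prec e1 e2.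
Proof.
  intros He1 He2 (t1 & t2 & H1 & H2 & Ht) Hni. split; [split|].
  - exact (ev_le_of_composable He1 He2 H1 H2 Ht Hni).
  - exact (ev_neq_of_composable He1 He2 H1 H2 Ht Hni).
  - intros (e & He & Hbetween).
    exact (no_fwd_event_between_composable He1 He He2 H1 H2 Ht Hbetween).
Qed.

Lemma composable_of_ev_prec (e1 e2 : event X) : is_fwd_event e1 -> is_fwd_event e2 ->
  ev_prec e1 e2 -> ev_composable e1 e2.
Proof.
  intros He1 He2 [[Hle Hne] Hnone].
  assert (Ht0 : exists t0, e2 t0)
    by (destruct He2 as (t0 & _ & _ & Ht0); exists t0; apply Ht0, evq_refl).
  destruct Ht0 as [t0 Ht0].
  destruct (exists_repr_no_bwd_indep He2 Ht0) as (x & Hx & Hmin).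
  assert (Hx1 : ~ e1 x) by (intros Hx1; exact (Hne (fwd_event_ev_eq He1 He2 Hx1 Hx))).
  destruct (occ_pos_history He1 (occ_src_pos_of_le He1 He2 Hle Hx Hx1))
    as (pre & w & Ppre & Bpre & Epre & Vw & Bw & Hw).
  destruct (bwd_path_bubble Ppre Bpre (z := inv w) (valid_inv Vw))
    as (y & Vy & Fy & Ey & Hley);
    [unfold inv; simpl; rewrite Bw; reflexivity | exact (eq_sym Epre) |].
  destruct (classic (e1 y)) as [Hy | Hy]; [exists y, x; auto | exfalso].
  assert (Hyx : ~ ι y x).
  { intros Hi. apply (Hmin (inv y)).
    - apply valid_inv, Vy.
    - unfold inv; simpl; rewrite Fy; reflexivity.
    - exact Ey.
    - apply iota_sym, HRPI, Hi. }
  assert (Hy2 : ~ core_indep (evq X y) e2)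
    by exact (not_core_indep_of_not_iota (class_fwd_event Vy Fy) He2 (evq_refl X y) Hx Hyx).
  apply Hnone. exists (evq X y). split; [exact (class_fwd_event Vy Fy)|]. split; split.
  - apply ev_le_ev_eq with (evq X (inv w)) (evq X y); [|intros u; tauto | exact Hley].
    intros u. symmetry. apply (fwd_event_mem He1 Hw).
  - intros Heq. apply Hy, Heq, evq_refl.
  - exact (ev_le_of_composable (class_fwd_event Vy Fy) He2 (evq_refl X y) Hx Ey Hy2).
  - exact (ev_neq_of_composable (class_fwd_event Vy Fy) He2 (evq_refl X y) Hx Ey Hy2).
Qed.

End Events.

Theorem lemma5p10 (L : LTSI) (e1 e2 : event L) :
  pre_reversible L -> IRE L -> RPI L ->
  is_fwd_event e1 -> is_fwd_event e2 ->
  (ev_prec e1 e2 <-> ev_composable e1 e2 /\ ~ core_indep e1 e2).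
Proof.
  intros (HSP & HBTI & HWF & HPCI) HIRE HRPI He1 He2. split.
  - intros Hprec. split.
    + exact (composable_of_ev_prec HSP HBTI HWF HPCI HIRE HRPI He1 He2 Hprec).
    + intros (x & y & Hx & Hy & Exy & _).
      exact (ev_lt_not_coinitial HSP HBTI HWF HPCI HIRE HRPI He1 He2 (proj1 Hprec) Hx Hy Exy).
  - intros [Hcomp Hni]. exact (ev_prec_of_composable HSP HBTI HWF HPCI HIRE HRPI He1 He2 Hcomp Hni).
Qed.
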